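(* Let $n\ge 1$, $N\ge 2$ even, $m>0$, and let $D_m=-\mathrm{i}\sum_{j=1}^n\alpha^j\partial_{x^j}+m\beta$ be a Dirac operator on $\mathbb{R}^n$ with $N\times N$ self-adjoint, mutually anticommuting matrices $\alpha^1,\dots,\alpha^n,\beta$ satisfying $(\alpha^j)^2=\beta^2=1_N$. Let $\bm{K}:\mathbb{C}^N\to\mathbb{C}^N$ denote complex conjugation, and let $B\in\mathrm{End}(\mathbb{C}^N)$ satisfy $$\{B\bm{K},D_m\}=0,\qquad B\bm{K}=\bm{K}B^\ast,\qquad B^\ast B=1_N.$$ For $\psi\in L^2(\mathbb{R}^n,\mathbb{C}^N)$ define $$Q(\psi)=\int_{\mathbb{R}^n}\psi(x)^\ast\psi(x)\,dx,\qquad \Lambda(\psi)=\int_{\mathbb{R}^n}\psi(x)^\ast B\bm{K}\psi(x)\,dx.$$ Let $a,b\in\mathbb{C}$ with $|a|^2-|b|^2=1$, and set $g=a+bB\bm{K}$ (acting pointwise, $g\psi=a\psi+bB\overline{\psi}$). Then for every $\psi\in L^2(\mathbb{R}^n,\mathbb{C}^N)$, $$Q(g\psi)=(|a|^2+|b|^2)Q(\psi)+2\,\mathrm{Re}\{\bar a b\,\Lambda(\psi)\},$$ $$\Lambda(g\psi)=\bar a^2\Lambda(\psi)+2\bar a\bar b\,Q(\psi)+\bar b^2\,\overline{\Lambda(\psi)},$$ and consequently $$Q(g\psi)^2-|\Lambda(g\psi)|^2=Q(\psi)^2-|\Lambda(\psi)|^2.$$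
   Context: $\{X,Y\}=XY+YX$ denotes the anticommutator; $\psi^\ast$ is the hermitian conjugate. The set of operators $a+bB\bm{K}$ with $|a|^2-|b|^2=1$ is called the Bogoliubov group. *)

From HB Require Import structures.
From mathcomp Require Import all_boot all_order all_algebra.
From mathcomp Require Import all_classical all_reals all_analysis.
From mathcomp Require Import complex.
Import numFieldNormedType.Exports.

Set Implicit Arguments.
Unset Strict Implicit.
Unset Printing Implicit Defensive.

Import Order.TTheory GRing.Theory Num.Theory.
Local Open Scope ring_scope.
Local Open Scope classical_set_scope.

Section DiracDefs.
Variable R : realType.
Local Notation C := (R[i]).

Definition hadj (p q : nat) (M : 'M[C]_(p, q)) : 'M[C]_(q, p) :=
  (map_mx conjc M)^T.

Definition cconj (p q : nat) (M : 'M[C]_(p, q)) : 'M[C]_(p, q) :=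
  map_mx conjc M.

Definition box (n : nat) (a b : 'rV[R]_n) : set 'rV[R]_n :=
  [set x | forall i : 'I_n, a 0 i < x 0 i <= b 0 i].

Definition boxes (n : nat) : set (set 'rV[R]_n) :=
  [set box a b | a in [set: 'rV[R]_n] & b in [set: 'rV[R]_n]].

(* R^n with its Borel sigma-algebra (generated by the boxes) *)
Definition Rn (n : nat) := g_sigma_algebraType (@boxes n).

(* mu is Lebesgue measure on R^n: it gives every box its volume
   (this determines mu uniquely on the Borel sigma-algebra) *)
Definition is_lebesgue_Rn (n : nat) (mu : {measure set (Rn n) -> \bar R}) :=
  forall a b : 'rV[R]_n, (forall i, a 0 i <= b 0 i) ->
    mu (box a b) = ((\prod_(i < n) (b 0 i - a 0 i))%:E)%E.

Definition nsq (N : nat) (v : 'cV[C]_N) : R :=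
  \sum_(k < N) (complex.Re (v k 0) ^+ 2 + complex.Im (v k 0) ^+ 2).

Definition L2 (n N : nat) (mu : {measure set (Rn n) -> \bar R})
    (psi : 'rV[R]_n -> 'cV[C]_N) : Prop :=
  (forall k : 'I_N, measurable_fun (setT : set (Rn n))
        (fun x : Rn n => complex.Re (psi x k 0)) /\
      measurable_fun (setT : set (Rn n))
        (fun x : Rn n => complex.Im (psi x k 0))) /\
  (\int[mu]_(x in (setT : set (Rn n))) (nsq (psi x))%:E < +oo)%E.

Definition cint (n : nat) (mu : {measure set (Rn n) -> \bar R})
    (f : 'rV[R]_n -> C) : C :=
  Complex (Rintegral mu (setT : set (Rn n)) (fun x : Rn n => complex.Re (f x)))
          (Rintegral mu (setT : set (Rn n)) (fun x : Rn n => complex.Im (f x))).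

Definition Qf (n N : nat) (mu : {measure set (Rn n) -> \bar R})
    (psi : 'rV[R]_n -> 'cV[C]_N) : C :=
  cint mu (fun x => (hadj (psi x) *m psi x) 0 0).

Definition Lambdaf (n N : nat) (mu : {measure set (Rn n) -> \bar R})
    (B : 'M[C]_N) (psi : 'rV[R]_n -> 'cV[C]_N) : C :=
  cint mu (fun x => (hadj (psi x) *m (B *m cconj (psi x))) 0 0).

Definition BKop (n N : nat) (B : 'M[C]_N) (psi : 'rV[R]_n -> 'cV[C]_N) :
  'rV[R]_n -> 'cV[C]_N := fun x => B *m cconj (psi x).

Definition gop (n N : nat) (a b : C) (B : 'M[C]_N)
    (psi : 'rV[R]_n -> 'cV[C]_N) : 'rV[R]_n -> 'cV[C]_N :=
  fun x => a *: psi x + b *: (B *m cconj (psi x)).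

Definition evec (n : nat) (j : 'I_n) : 'rV[R]_n := delta_mx 0 j.

Definition cdiff (n N : nat) (psi : 'rV[R]_n -> 'cV[C]_N) : Prop :=
  forall (k : 'I_N) (x : 'rV[R]_n),
    differentiable (fun y : 'rV[R]_n => complex.Re (psi y k 0)) x /\
    differentiable (fun y : 'rV[R]_n => complex.Im (psi y k 0)) x.

Definition pderiv (n N : nat) (psi : 'rV[R]_n -> 'cV[C]_N) (j : 'I_n)
    (x : 'rV[R]_n) : 'cV[C]_N :=
  \col_k Complex ('D_(evec j) (fun y : 'rV[R]_n => complex.Re (psi y k 0)) x)
                 ('D_(evec j) (fun y : 'rV[R]_n => complex.Im (psi y k 0)) x).

Definition Dirac (n N : nat) (alpha : 'I_n -> 'M[C]_N) (beta : 'M[C]_N) (m : R)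
    (psi : 'rV[R]_n -> 'cV[C]_N) : 'rV[R]_n -> 'cV[C]_N :=
  fun x => - (Complex 0 1) *: (\sum_(j < n) alpha j *m pderiv psi j x)
           + (Complex m 0) *: (beta *m psi x).

Definition anticommutes_BK_Dirac (n N : nat) (B : 'M[C]_N)
    (alpha : 'I_n -> 'M[C]_N) (beta : 'M[C]_N) (m : R) : Prop :=
  forall psi : 'rV[R]_n -> 'cV[C]_N, cdiff psi ->
    forall x, BKop B (Dirac alpha beta m psi) x
              + Dirac alpha beta m (BKop B psi) x = 0.

Definition dirac_matrices (n N : nat) (alpha : 'I_n -> 'M[C]_N)
    (beta : 'M[C]_N) : Prop :=
  [/\ forall j, hadj (alpha j) = alpha j,
      hadj beta = beta,
      forall j k, j != k -> alpha j *m alpha k + alpha k *m alpha j = 0,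
      forall j, alpha j *m beta + beta *m alpha j = 0 &
      (forall j, alpha j *m alpha j = 1%:M) /\ beta *m beta = 1%:M].

End DiracDefs.

From HB Require Import structures.
From mathcomp Require Import all_boot all_order all_algebra.
From mathcomp Require Import all_classical all_reals all_analysis.
From mathcomp Require Import complex measurable_realfun.
From mathcomp Require Import ring lra.
Import numFieldNormedType.Exports.
Import Order.TTheory GRing.Theory Num.Theory.

Set Implicit Arguments.
Unset Strict Implicit.
Unset Printing Implicit Defensive.

Local Open Scope ring_scope.

(* BK is antiunitary, <BK u, BK v> = <v, u>, and since BK = K B^* and B is
   unitary it is an involution.  Expanding the densities u^* u and u^* BK u of
   a u + b BK u with these two rules gives the transformation laws pointwise.
   The integral is C-linear and commutes with complex conjugation on integrable
   functions, and both densities are integrable because they are sums of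
   products of square-integrable components of psi; so the laws hold for Q and
   Lambda.  As Q is real, the invariant is then the polynomial identity
   Q'^2 - |Lambda'|^2 = (|a|^2 - |b|^2)^2 (Q^2 - |Lambda|^2). *)

Section ComplexParts.
Variable R : rcfType.
Implicit Types x y : R[i].

Lemma ReM x y : complex.Re (x * y) =
  complex.Re x * complex.Re y - complex.Im x * complex.Im y.
Proof. by case: x; case: y. Qed.

Lemma ImM x y : complex.Im (x * y) =
  complex.Re x * complex.Im y + complex.Im x * complex.Re y.
Proof. by case: x; case: y. Qed.

Lemma ReJ x : complex.Re (conjc x) = complex.Re x.
Proof. by case: x. Qed.

Lemma ImJ x : complex.Im (conjc x) = - complex.Im x.
Proof. by case: x. Qed.

Lemma complex_ext x y :
  complex.Re x = complex.Re y -> complex.Im x = complex.Im y -> x = y.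
Proof. by case: x; case: y => /= ? ? ? ? -> ->. Qed.

End ComplexParts.

Section ComplexMatrices.
Variable R : realType.
Local Notation C := R[i].

Lemma cconjK p q (M : 'M[C]_(p, q)) : cconj (cconj M) = M.
Proof. by apply/matrixP=> i j; rewrite !mxE conjcK. Qed.

Lemma cconjD p q (M P : 'M[C]_(p, q)) : cconj (M + P) = cconj M + cconj P.
Proof. exact: map_mxD. Qed.

Lemma cconjZ p q (c : C) (M : 'M[C]_(p, q)) :
  cconj (c *: M) = conjc c *: cconj M.
Proof. exact: map_mxZ. Qed.

Lemma hadjD p q (M P : 'M[C]_(p, q)) : hadj (M + P) = hadj M + hadj P.
Proof. by rewrite /hadj map_mxD linearD. Qed.

Lemma hadjZ p q (c : C) (M : 'M[C]_(p, q)) :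
  hadj (c *: M) = conjc c *: hadj M.
Proof. by rewrite /hadj map_mxZ linearZ. Qed.

Lemma hadjM p q r (M : 'M[C]_(p, q)) (P : 'M[C]_(q, r)) :
  hadj (M *m P) = hadj P *m hadj M.
Proof. by rewrite /hadj map_mxM trmx_mul. Qed.

Lemma hadj_cconj p q (M : 'M[C]_(p, q)) : hadj (cconj M) = M^T.
Proof. by rewrite /hadj -[in RHS](cconjK M). Qed.

Definition dotc N (u v : 'cV[C]_N) : C := (hadj u *m v) 0 0.

Lemma dotcDl N (u w v : 'cV[C]_N) : dotc (u + w) v = dotc u v + dotc w v.
Proof. by rewrite /dotc hadjD mulmxDl mxE. Qed.

Lemma dotcDr N (u v w : 'cV[C]_N) : dotc u (v + w) = dotc u v + dotc u w.
Proof. by rewrite /dotc mulmxDr mxE. Qed.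

Lemma dotcZl N (c : C) (u v : 'cV[C]_N) :
  dotc (c *: u) v = conjc c * dotc u v.
Proof. by rewrite /dotc hadjZ -scalemxAl mxE. Qed.

Lemma dotcZr N (c : C) (u v : 'cV[C]_N) : dotc u (c *: v) = c * dotc u v.
Proof. by rewrite /dotc -scalemxAr mxE. Qed.

Lemma conjc_dotc N (u v : 'cV[C]_N) : conjc (dotc u v) = dotc v u.
Proof.
rewrite /dotc !mxE rmorph_sum; apply: eq_bigr => j _.
by rewrite !mxE rmorphM /= conjcK mulrC.
Qed.

Lemma dotc_mulmxE N (u v : 'cV[C]_N) (M : 'M[C]_N) :
  dotc u (M *m v) = \sum_j \sum_k M j k * (conjc (u j 0) * v k 0).
Proof.
rewrite /dotc /hadj mxE; apply: eq_bigr => j _; rewrite !mxE mulr_sumr.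
by apply: eq_bigr => k _; ring.
Qed.

Lemma le_component_nsq N (v : 'cV[C]_N) k :
  complex.Re (v k 0) ^+ 2 + complex.Im (v k 0) ^+ 2 <= nsq v.
Proof.
rewrite /nsq (bigD1 k) //= lerDl.
by apply: sumr_ge0 => j _; rewrite addr_ge0 ?sqr_ge0.
Qed.

Lemma nsq_ge0 N (v : 'cV[C]_N) : 0 <= nsq v.
Proof. by apply: sumr_ge0 => j _; rewrite addr_ge0 ?sqr_ge0. Qed.

End ComplexMatrices.

Section AntiunitaryBK.
Variables (R : realType) (N : nat) (B : 'M[R[i]]_N).
Hypothesis BK_KBadj :
  forall v : 'cV[R[i]]_N, B *m cconj v = cconj (hadj B *m v).
Hypothesis B_unitary : hadj B *m B = 1%:M.
Local Notation BK u := (B *m cconj u).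

Lemma dotc_BK (u v : 'cV[R[i]]_N) : dotc (BK u) (BK v) = dotc v u.
Proof.
have trE (M : 'M[R[i]]_1) : M 0 0 = M^T 0 0 by rewrite mxE.
rewrite /dotc hadjM hadj_cconj mulmxA -(mulmxA _ _ B) B_unitary mulmx1.
by rewrite [LHS]trE trmx_mul trmxK.
Qed.

Lemma BK_antilinear (a b : R[i]) (u v : 'cV[R[i]]_N) :
  BK (a *: u + b *: v) = conjc a *: BK u + conjc b *: BK v.
Proof. by rewrite cconjD !cconjZ mulmxDr -!scalemxAr. Qed.

Lemma BKK (u : 'cV[R[i]]_N) : BK (BK u) = u.
Proof. by rewrite BK_KBadj mulmxA B_unitary mul1mx cconjK. Qed.

Lemma dotc_Bogoliubov (a b : R[i]) (u : 'cV[R[i]]_N)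
    (v := a *: u + b *: BK u) :
  dotc v v = (a * conjc a + b * conjc b) * dotc u u
             + conjc a * b * dotc u (BK u)
             + conjc (conjc a * b * dotc u (BK u)).
Proof.
rewrite /v dotcDl !dotcDr !dotcZl !dotcZr dotc_BK -(conjc_dotc u (BK u)).
by rewrite !rmorphM /= conjcK; ring.
Qed.

Lemma dotc_BK_Bogoliubov (a b : R[i]) (u : 'cV[R[i]]_N)
    (v := a *: u + b *: BK u) :
  dotc v (BK v) = conjc a ^+ 2 * dotc u (BK u)
                  + 2 * conjc a * conjc b * dotc u u
                  + conjc b ^+ 2 * conjc (dotc u (BK u)).
Proof.
rewrite /v BK_antilinear BKK dotcDl !dotcDr !dotcZl !dotcZr dotc_BK.
by rewrite (conjc_dotc u (BK u)); ring.
Qed.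

End AntiunitaryBK.

Lemma Bogoliubov_invariant (R : rcfType) (a b q l : R[i]) : conjc q = q ->
  let q' := (a * conjc a + b * conjc b) * q + conjc a * b * l
            + conjc (conjc a * b * l) in
  let l' := conjc a ^+ 2 * l + 2 * conjc a * conjc b * q
            + conjc b ^+ 2 * conjc l in
  q' ^+ 2 - l' * conjc l' =
  (a * conjc a - b * conjc b) ^+ 2 * (q ^+ 2 - l * conjc l).
Proof.
move=> q_real q' l'; rewrite /q' /l'.
by rewrite !(rmorphD, rmorphM, rmorphXn, rmorph1) /= !conjcK q_real; ring.
Qed.

Section ComplexIntegral.
Variables (d : measure_display) (T : measurableType d) (R : realType).
Variable mu : {measure set T -> \bar R}.
Local Notation C := R[i].
Implicit Types f g h : T -> C.

Definition cintegrable f :=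
  mu.-integrable setT (fun x => (complex.Re (f x))%:E) /\
  mu.-integrable setT (fun x => (complex.Im (f x))%:E).

Definition cintegral f : C :=
  Complex (Rintegral mu setT (fun x => complex.Re (f x)))
          (Rintegral mu setT (fun x => complex.Im (f x))).

Lemma cintegrableD f g :
  cintegrable f -> cintegrable g -> cintegrable (fun x => f x + g x).
Proof.
move=> [fRe fIm] [gRe gIm]; split.
- apply: (eq_integrable measurableT _ _ _
    (integrableD measurableT fRe gRe)) => x _.
  by rewrite raddfD.
- apply: (eq_integrable measurableT _ _ _
    (integrableD measurableT fIm gIm)) => x _.
  by rewrite raddfD.
Qed.

Lemma cintegrableZ (c : C) f : cintegrable f -> cintegrable (fun x => c * f x).
Proof.
move=> [fRe fIm]; split.
- apply: (eq_integrable measurableT _ _ _ (integrableB measurableT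
    (integrableZl measurableT (complex.Re c) fRe)
    (integrableZl measurableT (complex.Im c) fIm))) => x _.
  by rewrite ReM.
- apply: (eq_integrable measurableT _ _ _ (integrableD measurableT
    (integrableZl measurableT (complex.Re c) fIm)
    (integrableZl measurableT (complex.Im c) fRe))) => x _.
  by rewrite ImM.
Qed.

Lemma cintegrableJ f : cintegrable f -> cintegrable (fun x => conjc (f x)).
Proof.
move=> [fRe fIm]; split.
- by apply: (eq_integrable measurableT _ _ _ fRe) => x _; rewrite ReJ.
- apply: (eq_integrable measurableT _ _ _ (integrableN fIm)) => x _.
  by rewrite ImJ.
Qed.

Lemma cintegrable_sum (I : Type) (s : seq I) (F : I -> T -> C) :
  (forall i, cintegrable (F i)) -> cintegrable (fun x => \sum_(i <- s) F i x).
Proof.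
move=> iF; split.
- apply: (eq_integrable measurableT _ _ _
    (integrable_sum measurableT s (fun i _ => (iF i).1))) => x _.
  by rewrite raddf_sum sumEFin.
- apply: (eq_integrable measurableT _ _ _
    (integrable_sum measurableT s (fun i _ => (iF i).2))) => x _.
  by rewrite raddf_sum sumEFin.
Qed.

Lemma cintegralD f g : cintegrable f -> cintegrable g ->
  cintegral (fun x => f x + g x) = cintegral f + cintegral g.
Proof.
move=> [fRe fIm] [gRe gIm]; apply: complex_ext => /=; rewrite -RintegralD //;
  by apply: eq_Rintegral => x _; rewrite raddfD.
Qed.

Lemma cintegralZ (c : C) f : cintegrable f ->
  cintegral (fun x => c * f x) = c * cintegral f.
Proof.
move=> [fRe fIm].
have iZ k (h : T -> R) : mu.-integrable setT (EFin \o h) ->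
    mu.-integrable setT (EFin \o (fun x => k * h x)).
  exact: integrableZl.
apply: complex_ext.
- rewrite ReM /= -!RintegralZl // -RintegralB //; try exact: iZ.
  by apply: eq_Rintegral => x _; rewrite ReM.
- rewrite ImM /= -!RintegralZl // -RintegralD //; try exact: iZ.
  by apply: eq_Rintegral => x _; rewrite ImM.
Qed.

Lemma cintegralJ f : cintegrable f ->
  cintegral (fun x => conjc (f x)) = conjc (cintegral f).
Proof.
move=> [_ fIm]; apply: complex_ext; rewrite ?ReJ ?ImJ /=.
- by apply: eq_Rintegral => x _; rewrite ReJ.
- rewrite -mulN1r -RintegralZl //.
  by apply: eq_Rintegral => x _; rewrite ImJ mulN1r.
Qed.

Lemma cintegral_lincomb (c1 c2 c3 : C) f g h :
  cintegrable f -> cintegrable g -> cintegrable h ->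
  cintegral (fun x => c1 * f x + c2 * g x + c3 * conjc (h x)) =
  c1 * cintegral f + c2 * cintegral g + c3 * conjc (cintegral h).
Proof.
move=> iF iG iH; have iJ := cintegrableJ iH.
rewrite cintegralD ?cintegralD ?cintegralZ ?cintegralJ //;
  by do ?[apply: cintegrableD | apply: cintegrableZ].
Qed.

Definition csq_integrable f :=
  [/\ measurable_fun setT (fun x => complex.Re (f x)),
      measurable_fun setT (fun x => complex.Im (f x)) &
      mu.-integrable setT
        (fun x => (complex.Re (f x) ^+ 2 + complex.Im (f x) ^+ 2)%:E)].

Lemma integrable_mul_of_sqr_le (u v w : T -> R) :
  measurable_fun setT u -> measurable_fun setT v ->
  mu.-integrable setT (EFin \o w) ->
  (forall x, u x ^+ 2 <= w x) -> (forall x, v x ^+ 2 <= w x) ->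
  mu.-integrable setT (fun x => (u x * v x)%:E).
Proof.
move=> mU mV iw uw vw; apply: le_integrable iw => //.
  by apply/measurable_EFinP; exact: measurable_funM.
move=> x _ /=; rewrite lee_fin (ger0_norm (le_trans (sqr_ge0 _) (uw x))).
by rewrite ler_norml; have := uw x; have := vw x => *; apply/andP; split; nra.
Qed.

Lemma cintegrable_mul f g :
  csq_integrable f -> csq_integrable g -> cintegrable (fun x => f x * g x).
Proof.
move=> [mfRe mfIm ifsq] [mgRe mgIm igsq].
pose w x := (complex.Re (f x) ^+ 2 + complex.Im (f x) ^+ 2)
          + (complex.Re (g x) ^+ 2 + complex.Im (g x) ^+ 2).
have iw : mu.-integrable setT (EFin \o w).
  exact: (eq_integrable measurableT _ _ _ (integrableD measurableT ifsq igsq)).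
have wfRe x : complex.Re (f x) ^+ 2 <= w x by rewrite /w; nra.
have wfIm x : complex.Im (f x) ^+ 2 <= w x by rewrite /w; nra.
have wgRe x : complex.Re (g x) ^+ 2 <= w x by rewrite /w; nra.
have wgIm x : complex.Im (g x) ^+ 2 <= w x by rewrite /w; nra.
have im := integrable_mul_of_sqr_le _ _ iw.
split.
- apply: (eq_integrable measurableT _ _ _ (integrableB measurableT
    (im _ _ mfRe mgRe wfRe wgRe) (im _ _ mfIm mgIm wfIm wgIm))) => x _.
  by rewrite ReM.
- apply: (eq_integrable measurableT _ _ _ (integrableD measurableT
    (im _ _ mfRe mgIm wfRe wgIm) (im _ _ mfIm mgRe wfIm wgRe))) => x _.
  by rewrite ImM.
Qed.

Lemma csq_integrableJ f :
  csq_integrable f -> csq_integrable (fun x => conjc (f x)).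
Proof.
move=> [mRe mIm isq]; split.
- by apply: eq_measurable_fun mRe => x _; rewrite ReJ.
- by apply: eq_measurable_fun (measurable_funN mIm) => x _; rewrite ImJ.
- apply: (eq_integrable measurableT _ _ _ isq) => x _.
  by rewrite ReJ ImJ sqrrN.
Qed.

Lemma cintegrable_dotc_mulmx N (M : 'M[C]_N) (u v : T -> 'cV[C]_N) :
  (forall k, csq_integrable (fun x => u x k 0)) ->
  (forall k, csq_integrable (fun x => v x k 0)) ->
  cintegrable (fun x => dotc (u x) (M *m v x)).
Proof.
move=> sq_u sq_v.
have -> : (fun x => dotc (u x) (M *m v x)) =
    (fun x => \sum_j \sum_k M j k * (conjc (u x j 0) * v x k 0)).
  by apply/funext => x; exact: dotc_mulmxE.
do 2![apply: cintegrable_sum => ?]; apply: cintegrableZ.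
exact: cintegrable_mul (csq_integrableJ (sq_u _)) (sq_v _).
Qed.

Lemma csq_integrable_component N (psi : T -> 'cV[C]_N) :
  (forall k, measurable_fun setT (fun x => complex.Re (psi x k 0)) /\
             measurable_fun setT (fun x => complex.Im (psi x k 0))) ->
  (\int[mu]_x (nsq (psi x))%:E < +oo)%E ->
  forall k, csq_integrable (fun x => psi x k 0).
Proof.
move=> m_psi fin_nsq k; have [mRe mIm] := m_psi k.
have m_sq j : measurable_fun setT
    (fun x => complex.Re (psi x j 0) ^+ 2 + complex.Im (psi x j 0) ^+ 2).
  have [mRej mImj] := m_psi j.
  by apply: measurable_funD; exact: measurable_funX.
have i_nsq : mu.-integrable setT (EFin \o (fun x => nsq (psi x))).
  apply/integrableP; split; first exact/measurable_EFinP/measurable_sum.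
  rewrite (eq_integral (fun x => (nsq (psi x))%:E)) // => x _.
  by rewrite gee0_abs // lee_fin nsq_ge0.
split => //; apply: le_integrable i_nsq => //; first exact/measurable_EFinP.
move=> x _; rewrite /= lee_fin !ger0_norm ?nsq_ge0 ?le_component_nsq //.
by rewrite addr_ge0 ?sqr_ge0.
Qed.

End ComplexIntegral.

Section IntegratedBogoliubov.
Variables (d : measure_display) (T : measurableType d) (R : realType).
Variables (mu : {measure set T -> \bar R}) (N : nat) (B : 'M[R[i]]_N).
Hypothesis BK_KBadj :
  forall v : 'cV[R[i]]_N, B *m cconj v = cconj (hadj B *m v).
Hypothesis B_unitary : hadj B *m B = 1%:M.
Variable psi : T -> 'cV[R[i]]_N.
Hypothesis sq_psi : forall k, csq_integrable mu (fun x => psi x k 0).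

Local Notation Q := (cintegral mu (fun x => dotc (psi x) (psi x))).
Local Notation L :=
  (cintegral mu (fun x => dotc (psi x) (B *m cconj (psi x)))).

Lemma cintegrable_Q : cintegrable mu (fun x => dotc (psi x) (psi x)).
Proof.
have -> : (fun x => dotc (psi x) (psi x)) =
    (fun x => dotc (psi x) (1%:M *m psi x)).
  by apply/funext => x; rewrite mul1mx.
exact: cintegrable_dotc_mulmx.
Qed.

Lemma cintegrable_L :
  cintegrable mu (fun x => dotc (psi x) (B *m cconj (psi x))).
Proof.
apply: cintegrable_dotc_mulmx => // k.
have -> : (fun x => cconj (psi x) k 0) = (fun x => conjc (psi x k 0)).
  by apply/funext => x; rewrite mxE.
exact: csq_integrableJ.
Qed.

Lemma conjc_Q : conjc Q = Q.
Proof.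
rewrite -cintegralJ; last exact: cintegrable_Q.
by congr cintegral; apply/funext => x; rewrite conjc_dotc.
Qed.

Lemma cintegral_Bogoliubov (a b : R[i])
    (g := fun x => a *: psi x + b *: (B *m cconj (psi x))) :
  cintegral mu (fun x => dotc (g x) (g x)) =
  (a * conjc a + b * conjc b) * Q + conjc a * b * L + conjc (conjc a * b * L).
Proof.
transitivity (cintegral mu (fun x =>
    (a * conjc a + b * conjc b) * dotc (psi x) (psi x)
    + conjc a * b * dotc (psi x) (B *m cconj (psi x))
    + conjc (conjc a * b) * conjc (dotc (psi x) (B *m cconj (psi x))))).
  by congr cintegral; apply/funext => x; rewrite dotc_Bogoliubov // rmorphM.
by rewrite (cintegral_lincomb _ _ _ cintegrable_Q cintegrable_L cintegrable_L)
  [in RHS]rmorphM.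
Qed.

Lemma cintegral_BK_Bogoliubov (a b : R[i])
    (g := fun x => a *: psi x + b *: (B *m cconj (psi x))) :
  cintegral mu (fun x => dotc (g x) (B *m cconj (g x))) =
  conjc a ^+ 2 * L + 2 * conjc a * conjc b * Q + conjc b ^+ 2 * conjc L.
Proof.
transitivity (cintegral mu (fun x =>
    conjc a ^+ 2 * dotc (psi x) (B *m cconj (psi x))
    + 2 * conjc a * conjc b * dotc (psi x) (psi x)
    + conjc b ^+ 2 * conjc (dotc (psi x) (B *m cconj (psi x))))).
  by congr cintegral; apply/funext => x; rewrite dotc_BK_Bogoliubov.
exact: cintegral_lincomb cintegrable_L cintegrable_Q cintegrable_L.
Qed.

End IntegratedBogoliubov.

Theorem lemma2p8 (R : realType) (n N : nat) (m : R)
    (alpha : 'I_n -> 'M[R[i]]_N) (beta B : 'M[R[i]]_N)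
    (mu : {measure set (Rn R n) -> \bar R}) (a b : R[i])
    (psi : 'rV[R]_n -> 'cV[R[i]]_N) :
  (1 <= n)%N -> (2 <= N)%N -> ~~ odd N -> 0 < m ->
  dirac_matrices alpha beta ->
  anticommutes_BK_Dirac B alpha beta m ->
  (forall v : 'cV[R[i]]_N, B *m cconj v = cconj (hadj B *m v)) ->
  hadj B *m B = 1%:M ->
  is_lebesgue_Rn mu ->
  `|a| ^+ 2 - `|b| ^+ 2 = 1 ->
  L2 mu psi ->
  let Q := Qf mu in
  let L := Lambdaf mu B in
  let g := gop a b B in
  [/\ Q (g psi) = (`|a| ^+ 2 + `|b| ^+ 2) * Q psi
                  + 2 * Complex (complex.Re (conjc a * b * L psi)) 0,
      L (g psi) = conjc a ^+ 2 * L psi + 2 * conjc a * conjc b * Q psi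
                  + conjc b ^+ 2 * conjc (L psi) &
      Q (g psi) ^+ 2 - `|L (g psi)| ^+ 2 = Q psi ^+ 2 - `|L psi| ^+ 2].
Proof.
move=> _ _ _ _ _ _ BK_KBadj B_unitary _ hab [m_psi fin_nsq] Q L g.
have sq_psi := csq_integrable_component m_psi fin_nsq.
have EQ : Q (g psi) = (a * conjc a + b * conjc b) * Q psi
                      + conjc a * b * L psi + conjc (conjc a * b * L psi).
  exact: cintegral_Bogoliubov.
have EL : L (g psi) = conjc a ^+ 2 * L psi + 2 * conjc a * conjc b * Q psi
                      + conjc b ^+ 2 * conjc (L psi).
  exact: cintegral_BK_Bogoliubov.
have Q_real : conjc (Q psi) = Q psi by exact: conjc_Q.
have twoRe (z : R[i]) : 2 * Complex (complex.Re z) 0 = z + conjc z.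
  exact: esym (addcJ z).
have hab' : a * conjc a - b * conjc b = 1 by rewrite -!sqr_normc.
split; first by rewrite EQ twoRe !sqr_normc addrA.
  exact: EL.
by rewrite EQ EL !sqr_normc Bogoliubov_invariant // hab' expr1n mul1r.
Qed.
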